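(* Let $G$ be a finite simple graph with $m$ vertices, $m\geq 4$, and let $I_G$ be its toric ideal. Then the largest degree $d$ of a binomial in the universal Gr\''obner basis of $I_G$ satisfies $d\leq m-2$.
   Context: For a finite simple graph $G$ with edges $e_1,\dots,e_k$ and a field $\mathbb{K}$, associate to each edge $e=\{v_i,v_j\}$ the vector $a_e=v_i+v_j$ in the free abelian group on the vertices; the toric ideal $I_G\subseteq\mathbb{K}[e_1,\dots,e_k]$ is the ideal generated by all binomials $\mathbf{e}^{u}-\mathbf{e}^{v}$ with $\sum u_i a_{e_i}=\sum v_i a_{e_i}$ (such binomials are homogeneous; their degree is the total degree of either monomial). The universal Gr\''obner basis of an ideal is the union of all its reduced Gr\''obner bases over all term orders. *)

From HB Require Import structures.
From mathcomp Require Import all_boot all_order all_algebra.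
From mathcomp Require Import mpoly.
Set Implicit Arguments. Unset Strict Implicit. Unset Printing Implicit Defensive.
Import GRing.Theory.
Local Open Scope ring_scope.

(* A finite simple graph on the vertex set 'I_m with k edges e_0..e_(k-1):
   edge i joins vertices eu i and ev i.  Simple: no loops, no parallel edges. *)
Definition simple_graph (m k : nat) (eu ev : 'I_k -> 'I_m) : Prop :=
  (forall i, eu i != ev i) /\
  (forall i j, [set eu i; ev i] = [set eu j; ev j] -> i = j).

(* a_e = v_i + v_j in Z^m (here N^m), as a function of the vertex. *)
Definition edge_vec (m k : nat) (eu ev : 'I_k -> 'I_m) (i : 'I_k) (x : 'I_m) : nat :=
  ((eu i == x) + (ev i == x))%N.

Definition edge_comb (m k : nat) (eu ev : 'I_k -> 'I_m) (u : 'X_{1..k}) (x : 'I_m) : nat :=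
  (\sum_(i < k) u i * edge_vec eu ev i x)%N.

Definition toric_generator (K : fieldType) (m k : nat) (eu ev : 'I_k -> 'I_m)
    (p : {mpoly K[k]}) : Prop :=
  exists u v : 'X_{1..k},
    (forall x, edge_comb eu ev u x = edge_comb eu ev v x) /\ p = 'X_[u] - 'X_[v].

Definition ideal_gen (K : fieldType) (k : nat) (S : {mpoly K[k]} -> Prop)
    (p : {mpoly K[k]}) : Prop :=
  exists gs : seq ({mpoly K[k]} * {mpoly K[k]}),
    (forall x, x \in gs -> S x.2) /\ p = \sum_(x <- gs) x.1 * x.2.

Definition toric_ideal (K : fieldType) (m k : nat) (eu ev : 'I_k -> 'I_m) :=
  ideal_gen (@toric_generator K m k eu ev).

Definition term_order (k : nat) (lt : rel 'X_{1..k}) : Prop :=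
  [/\ irreflexive lt, transitive lt,
      (forall a b, a != b -> lt a b || lt b a),
      (forall a b c, lt a b -> lt (a + c)%MM (b + c)%MM)
    & (forall a, a != 0%MM -> lt 0%MM a)].

Definition lead_mon (K : fieldType) (k : nat) (lt : rel 'X_{1..k})
    (p : {mpoly K[k]}) (mm : 'X_{1..k}) : Prop :=
  mm \in msupp p /\ (forall m', m' \in msupp p -> m' != mm -> lt m' mm).

Definition reduced_groebner (K : fieldType) (k : nat) (lt : rel 'X_{1..k})
    (I : {mpoly K[k]} -> Prop) (G : seq {mpoly K[k]}) : Prop :=
  [/\ (forall g, g \in G -> I g /\ g != 0),
      (* leading terms of G generate the initial ideal *)
      (forall f, I f -> f != 0 -> forall mf, lead_mon lt f mf ->
         exists2 g, g \in G & exists2 mg, lead_mon lt g mg & (mg <= mf)%MM),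
      (forall g, g \in G -> forall mg, lead_mon lt g mg -> g@_mg = 1)
    &
      (forall g h, g \in G -> h \in G -> g != h ->
         forall mh, lead_mon lt h mh -> forall mm, mm \in msupp g -> ~~ (mh <= mm)%MM)].

Definition in_universal_groebner (K : fieldType) (k : nat)
    (I : {mpoly K[k]} -> Prop) (g : {mpoly K[k]}) : Prop :=
  exists lt : rel 'X_{1..k}, exists G : seq {mpoly K[k]},
    [/\ term_order lt, reduced_groebner lt I G & g \in G].

From HB Require Import structures.
From mathcomp Require Import all_boot all_order all_algebra.
From mathcomp Require Import mpoly zify.

(* Substituting t_x t_y for each edge xy kills I_G, so every monomial of an
   element of I_G shares its fibre (same vertex degrees) with another of its
   monomials.  For g in a reduced Groebner basis, reducedness forces all
   monomials of g to have the degree of the leading one, e^u, and makes e^u and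
   a fibre partner e^w a primitive pair.  A primitive pair consists of the even
   and the odd steps of a closed walk of length 2 deg u in which no proper
   nonempty set of steps is balanced.  In such a walk two visits of a vertex
   lie an odd distance apart, so no vertex is visited three times, and each of
   the two arcs cut out by a revisit contains two vertices visited only once;
   counting visits gives 2 deg u + 4 <= 2 m. *)

Set Implicit Arguments. Unset Strict Implicit. Unset Printing Implicit Defensive.
Import GRing.Theory.

Section PrimitiveWalk.
Variables (m : nat) (s : nat -> 'I_m) (L : nat).

Definition step_sign (t : nat) : int := if odd t then (-1)%R else 1%R.

Definition balance (P : pred nat) (x : 'I_m) : int :=
  (\sum_(0 <= t < L | P t) step_sign t * ((s t == x) + (s t.+1 == x))%:Z)%R.

Definition primitive_walk : Prop := forall P : pred nat,
  (forall x, balance P x = 0%R) -> count P (iota 0 L) = 0 \/ count P (iota 0 L) = L.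

Lemma step_signS t : step_sign t.+1 = (- step_sign t)%R.
Proof. by rewrite /step_sign /=; case: (odd t); rewrite ?opprK. Qed.

Lemma step_sign_gap a b : a <= b ->
  step_sign b = if odd (b - a) then (- step_sign a)%R else step_sign a.
Proof.
by move=> le_ab; rewrite oddB // /step_sign; case: (odd a); case: (odd b); rewrite ?opprK.
Qed.

Lemma balance_itv i j x : i < j -> j <= L ->
  balance (fun t => i <= t < j) x =
  (step_sign i * (s i == x)%:Z - step_sign j * (s j == x)%:Z)%R.
Proof.
move=> lt_ij le_jL.
have -> : balance (fun t => i <= t < j) x =
    (\sum_(i <= t < j) step_sign t * ((s t == x) + (s t.+1 == x))%:Z)%R.
  by rewrite (big_nat_widenl i 0) // (big_nat_widen 0 j L).
elim: j lt_ij {le_jL} => // j IH; rewrite ltnS leq_eqVlt => /predU1P[<-|lt_ij].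
  by rewrite big_nat1 PoszD mulrDr step_signS mulNr opprK.
rewrite big_nat_recr /= 1?ltnW // IH // PoszD mulrDr step_signS mulNr opprK.
by rewrite addrA addrNK.
Qed.

Lemma balance_or (P Q : pred nat) x : (forall t, ~~ (P t && Q t)) ->
  balance (fun t => P t || Q t) x = (balance P x + balance Q x)%R.
Proof.
move=> disj_PQ; rewrite /balance (bigID P) /=; congr (_ + _)%R; apply: eq_bigl => t.
  by rewrite andb_idl // => ->.
by have := disj_PQ t; case: (P t); case: (Q t).
Qed.

Lemma balance_closed x : ~~ odd L -> 0 < L -> s L = s 0 -> balance predT x = 0%R.
Proof.
move=> L_even L_gt0 s_closed.
have -> : balance predT x = balance (fun t => 0 <= t < L) x.
  by apply: congr_big_nat => // t ->.
by rewrite balance_itv // (step_sign_gap (leq0n L)) subn0 (negbTE L_even) s_closed subrr.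
Qed.

Hypotheses (L_even : ~~ odd L) (L_gt0 : 0 < L) (L_neq2 : L != 2) (s_closed : s L = s 0)
  (s_loopless : forall t, t < L -> s t != s t.+1) (s_primitive : primitive_walk).

Lemma balanced_steps_const P t0 t1 : (forall x, balance P x = 0%R) ->
  t0 < L -> t1 < L -> P t0 = P t1.
Proof.
move=> bal0 t0L t1L.
have count_gt0 t (Q : pred nat) : t < L -> Q t -> 0 < count Q (iota 0 L).
  by move=> tL Qt; rewrite -has_count; apply/hasP; exists t; rewrite ?mem_iota.
have := count_predC P (iota 0 L); rewrite size_iota => count_PC.
case: (s_primitive bal0) => cP; apply/idP/idP => Pt; apply: contraT => nPt.
- by have := count_gt0 _ _ t0L Pt; lia.
- by have := count_gt0 _ _ t1L Pt; lia.
- by have := count_gt0 _ (predC P) t1L nPt; lia.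
- by have := count_gt0 _ (predC P) t0L nPt; lia.
Qed.

Lemma revisit_gap_odd p q : p < q -> q < L -> s p = s q -> odd (q - p).
Proof.
move=> lt_pq qL spq; apply: contraT => even_qp.
have bal0 x : balance (fun t => p <= t < q) x = 0%R.
  by rewrite balance_itv ?(ltnW qL) // (step_sign_gap (ltnW lt_pq)) (negbTE even_qp) spq subrr.
have := balanced_steps_const bal0 (ltn_trans lt_pq qL) qL.
by rewrite leqnn lt_pq ltnn andbF.
Qed.

Lemma revisit_parity a b : a != b -> a < L -> b < L -> s a = s b -> odd a != odd b.
Proof.
wlog lt_ab : a b / a < b => [hwlog neq_ab aL bL sab|_ _ bL sab].
  case: (ltngtP a b) => [ab|ba|ab]; last by rewrite ab eqxx in neq_ab.
    exact: hwlog.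
  by rewrite eq_sym; apply: hwlog; rewrite 1?eq_sym.
have := revisit_gap_odd lt_ab bL sab; rewrite oddB 1?ltnW //.
by case: (odd a); case: (odd b).
Qed.

Lemma no_triple_visit a b c : a != b -> b != c -> a != c ->
  a < L -> b < L -> c < L -> s a = s b -> s b = s c -> False.
Proof.
move=> ab bc ac aL bL cL sab sbc.
have := revisit_parity ab aL bL sab; have := revisit_parity bc bL cL sbc.
have := revisit_parity ac aL cL (etrans sab sbc).
by case: (odd a); case: (odd b); case: (odd c).
Qed.

Lemma no_crossing p1 p2 q1 q2 : p1 < p2 -> p2 < q1 -> q1 < q2 -> q2 < L ->
  s p1 = s q1 -> s p2 = s q2 -> False.
Proof.
move=> lt_p12 lt_p2q1 lt_q12 q2L sp1 sp2.
have odd1 := revisit_gap_odd (ltn_trans lt_p12 lt_p2q1) (ltn_trans lt_q12 q2L) sp1.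
have odd2 := revisit_gap_odd (ltn_trans lt_p2q1 lt_q12) q2L sp2.
pose P t := (p1 <= t < p2) || (q1 <= t < q2).
have bal0 x : balance P x = 0%R.
  rewrite balance_or => [|t]; last by apply/negP => /andP[/andP[_ ?] /andP[? _]]; lia.
  rewrite !balance_itv //; try lia.
  rewrite (step_sign_gap (_ : p1 <= q1)) ?(step_sign_gap (_ : p2 <= q2)) ?odd1 ?odd2; try lia.
  by rewrite -sp1 -sp2 !mulNr !opprK addrACA subrr add0r addrC subrr.
have p1L : p1 < L by lia.
have p2L : p2 < L by lia.
have := balanced_steps_const bal0 p1L p2L.
by rewrite /P leqnn lt_p12 ltnn andbF /= => /esym/andP[]; lia.
Qed.

Definition visits (x : 'I_m) : nat := #|[set t : 'I_L | s t == x]|.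
Definition single_visit (t : nat) : bool := visits (s t) == 1.

Lemma revisit_partner t : t < L -> ~~ single_visit t ->
  exists t', [/\ t' < L, t' != t & s t' = s t].
Proof.
move=> tL not1; have : 1 < visits (s t).
  by rewrite ltn_neqAle eq_sym not1 card_gt0; apply/set0Pn; exists (Ordinal tL); rewrite inE.
case/card_gt1P => a [b [+ + neq_ab]]; rewrite !inE => /eqP sa /eqP sb.
have [at_|neq_at] := eqVneq (val a) t; first last.
  by exists (val a); split; rewrite ?ltn_ord.
exists (val b); split; rewrite ?ltn_ord //.
by apply: contra neq_ab => /eqP bt; apply/eqP/val_inj; rewrite /= at_ bt.
Qed.

Lemma visits_le2 x : visits x <= 2.
Proof.
rewrite leqNgt; apply/negP => /card_gt2P [a [b [c [[+ + +] [ab bc ca]]]]].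
rewrite !inE => /eqP sa /eqP sb /eqP sc.
apply: (@no_triple_visit a b c); by rewrite ?ltn_ord ?sa ?sb ?sc // eq_sym.
Qed.

Lemma revisit_gap_ge3 p q : p < q -> q < L -> s p = s q -> p.+3 <= q.
Proof.
move=> lt_pq qL spq; have odd_qp := revisit_gap_odd lt_pq qL spq.
have [q_p1|] := eqVneq q p.+1.
  by have := s_loopless (ltn_trans lt_pq qL); rewrite -q_p1 spq eqxx.
have [q_p2|] := eqVneq q p.+2; first by move: odd_qp; rewrite q_p2 -addn2 addKn.
lia.
Qed.

Lemma outer_arc_ge3 p q : p < q -> q < L -> s p = s q -> 3 <= p + (L - q).
Proof.
move=> lt_pq qL spq.
have : odd (p + (L - q)).
  have -> : p + (L - q) = L - (q - p) by lia.
  by rewrite oddB ?(revisit_gap_odd lt_pq qL spq) 1?(negbTE L_even) //; lia.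
have [arc1|] := eqVneq (p + (L - q)) 1; last by case: (p + (L - q)) => [|[|[|]]].
have [p0 q_pred] : p = 0 /\ q = L.-1 by lia.
have lt_qL : L.-1 < L by lia.
by have := s_loopless lt_qL; rewrite prednK // -q_pred -spq p0 s_closed eqxx.
Qed.

Lemma single_inside p q : p < q -> q < L -> s p = s q ->
  1 < #|[set t : 'I_L | p < t < q & single_visit t]|.
Proof.
have [n] := ubnP (q - p); elim: n p q => // n IH p q gap_n lt_pq qL spq.
have ge3 := revisit_gap_ge3 lt_pq qL spq.
have [all1|] := boolP [forall t : 'I_L, (p < t < q) ==> single_visit t].
  have p1L : p.+1 < L by lia.
  have p2L : p.+2 < L by lia.
  have in_set i (iL : i < L) : p < i < q ->
      Ordinal iL \in [set t : 'I_L | p < t < q & single_visit t].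
    by move=> piq; rewrite inE piq (implyP (forallP all1 (Ordinal iL))).
  apply/card_gt1P; exists (Ordinal p1L), (Ordinal p2L).
  by split; [apply: in_set | apply: in_set | rewrite -val_eqE /= ltn_eqF]; lia.
case/forallPn => t; rewrite negb_imply => /andP[/andP[pt tq] not1].
have [t' [t'L t't st't]] := revisit_partner (ltn_ord t) not1.
have sub t1 t2 : p <= t1 -> t2 <= q ->
    [set i : 'I_L | t1 < i < t2 & single_visit i] \subset
    [set i : 'I_L | p < i < q & single_visit i].
  move=> pt1 t2q; apply/subsetP => i; rewrite !inE => /andP[/andP[? ?] ->].
  by rewrite andbT; apply/andP; split; lia.
case: (ltngtP t' p) => [lt_t'p|lt_pt'|eq_t'p].
- by case: (no_crossing lt_t'p pt tq qL).
- case: (ltngtP t' q) => [lt_t'q|lt_qt'|eq_t'q].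
  + case: (ltngtP t t') => [lt_tt'|lt_t't|]; last by move/eqP; rewrite eq_sym (negbTE t't).
    * apply: leq_trans (IH t t' _ lt_tt' t'L (esym st't)) (subset_leq_card (sub _ _ _ _)); lia.
    * apply: leq_trans (IH t' t _ lt_t't (ltn_ord t) st't) (subset_leq_card (sub _ _ _ _)); lia.
  + by case: (no_crossing pt tq lt_qt' t'L); rewrite // st't.
  + by exfalso; apply: (@no_triple_visit p t q); first [lia | congruence].
- by exfalso; apply: (@no_triple_visit p t q); first [lia | congruence].
Qed.

Lemma single_outside p q : p < q -> q < L -> s p = s q ->
  1 < #|[set t : 'I_L | (t < p) || (q < t) & single_visit t]|.
Proof.
have [n] := ubnP (p + (L - q)); elim: n p q => // n IH p q arc_n lt_pq qL spq.
have ge3 := outer_arc_ge3 lt_pq qL spq.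
set S := [set t : 'I_L | _ & _].
have [all1|] := boolP [forall t : 'I_L, (t < p) || (q < t) ==> single_visit t].
  have in_S i (iL : i < L) : (i < p) || (q < i) -> Ordinal iL \in S.
    by move=> iout; rewrite inE iout (implyP (forallP all1 (Ordinal iL))).
  have [t1 [t2 [t1L t2L neq12 out1 out2]]] : exists t1 t2,
      [/\ t1 < L, t2 < L, t1 != t2, (t1 < p) || (q < t1) & (t2 < p) || (q < t2)].
    case: (leqP 2 p) => [le2p|lt_p2]; first by exists 0, 1; split; lia.
    case: (leqP 1 p) => [le1p|lt_p1]; first by exists 0, L.-1; split; lia.
    by exists L.-2, L.-1; split; lia.
  by apply/card_gt1P; exists (Ordinal t1L), (Ordinal t2L); rewrite !in_S // -val_eqE.
case/forallPn => t; rewrite negb_imply => /andP[t_out not1].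
have tL := ltn_ord t.
have [t' [t'L t't st't]] := revisit_partner tL not1.
have t'_out : (t' < p) || (q < t').
  case: (ltngtP t' p) => [//|lt_pt'|eq_t'p]; last first.
    by exfalso; apply: (@no_triple_visit p t q); first [lia | congruence].
  case: (ltngtP t' q) => [lt_t'q|//|eq_t'q]; last first.
    by exfalso; apply: (@no_triple_visit p t q); first [lia | congruence].
  by exfalso; case/orP: t_out => [tp|qt];
    [apply: (@no_crossing t p t' q) | apply: (@no_crossing p t' q t)].
have [a [b [lt_ab bL sab a_out b_out]]] : exists a b,
    [/\ a < b, b < L, s a = s b, (a < p) || (q < a) & (b < p) || (q < b)].
  case: (ltngtP t t') => [lt_tt'|lt_t't|eq_tt']; last by rewrite eq_tt' eqxx in t't.
  - by exists t, t'.
  - by exists t', t.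
have [inner|] := boolP ((b < p) || (q < a)).
  apply: leq_trans (single_inside lt_ab bL sab) (subset_leq_card _).
  by apply/subsetP => i; rewrite !inE => /andP[? ->]; rewrite andbT; lia.
move=> outer; apply: leq_trans (IH a b _ lt_ab bL sab) (subset_leq_card _); first lia.
by apply/subsetP => i; rewrite !inE => /andP[? ->]; rewrite andbT; lia.
Qed.

Lemma four_single_visits : 3 < #|[set t : 'I_L | single_visit t]|.
Proof.
have [all1|] := boolP [forall t : 'I_L, single_visit t].
  rewrite (_ : [set t | _] = setT) ?cardsT ?card_ord.
    by move: L_even L_gt0 L_neq2; case: (L) => [|[|[|[|]]]].
  by apply/setP => t; rewrite !inE (forallP all1).
case/forallPn => t not1; have [t' [t'L t't st't]] := revisit_partner (ltn_ord t) not1.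
have [p [q [lt_pq qL spq]]] : exists p q, [/\ p < q, q < L & s p = s q].
  case: (ltngtP t t') => [lt_tt'|lt_t't|eq_tt']; last by rewrite eq_tt' eqxx in t't.
  - by exists t, t'.
  - by exists t', t; rewrite ltn_ord.
have inside := single_inside lt_pq qL spq; have outside := single_outside lt_pq qL spq.
set In := [set t : 'I_L | _ & _] in inside; set Out := [set t : 'I_L | _ & _] in outside.
have disj : In :&: Out = set0.
  by apply/setP => i; rewrite !inE; apply/negP => /andP[/andP[? _] /andP[? _]]; lia.
have : In :|: Out \subset [set t : 'I_L | single_visit t].
  by apply/subsetP => i; rewrite !inE => /orP[] /andP[_ ->].
by move/subset_leq_card; rewrite cardsU disj cards0; lia.
Qed.

Lemma sum_visits (F : 'I_m -> nat) : \sum_(t < L) F (s t) = \sum_(x < m) visits x * F x.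
Proof.
rewrite (partition_big (fun t : 'I_L => s t) predT) //=; apply: eq_bigr => x _.
rewrite (eq_bigr (fun _ => F x)) => [|t /eqP <- //].
by rewrite sum_nat_cond_const.
Qed.

Lemma walk_length_bound : L + 4 <= 2 * m.
Proof.
have len : L = \sum_(x < m) visits x * 1 by rewrite -sum_visits sum_nat_const card_ord muln1.
have single : #|[set t : 'I_L | single_visit t]| = \sum_(x < m) visits x * (visits x == 1).
  rewrite -sum_visits -sum1dep_card big_mkcond /=.
  by apply: eq_bigr => t _; rewrite /single_visit; case: (_ == 1).
suff : L + #|[set t : 'I_L | single_visit t]| <= 2 * m by have := four_single_visits; lia.
have -> : 2 * m = \sum_(x < m) 2 by rewrite sum_nat_const card_ord mulnC.
rewrite {1}len single -big_split /=; apply: leq_sum => x _.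
by have := visits_le2 x; case: (visits x) => [|[|[|]]].
Qed.
End PrimitiveWalk.

Lemma lepm_add n (a b c d : 'X_{1..n}) : (a <= b)%MM -> (c <= d)%MM -> (a + c <= b + d)%MM.
Proof.
move=> /mnm_lepP le_ab /mnm_lepP le_cd; apply/mnm_lepP => i; rewrite !mnmDE.
exact: leq_add.
Qed.

Lemma lepm_anti n (a b : 'X_{1..n}) : (a <= b)%MM -> (b <= a)%MM -> a = b.
Proof.
move=> /mnm_lepP le_ab /mnm_lepP le_ba; apply/mnmP => i.
by apply/eqP; rewrite eqn_leq le_ab le_ba.
Qed.

Lemma eq_count_set2 (T : finType) (a b z : T) : a != b ->
  (a == z) + (b == z) = (z \in [set a; b]).
Proof.
by move=> neq_ab; rewrite !inE ![_ == z]eq_sym; case: eqP => // ->; rewrite (negbTE neq_ab).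
Qed.

Section EdgeComb.
Variables (m k : nat) (eu ev : 'I_k -> 'I_m).
Local Notation A := (edge_comb eu ev).

Lemma edge_combD a b x : A (a + b)%MM x = A a x + A b x.
Proof. by rewrite /edge_comb -big_split; apply: eq_bigr => i _; rewrite mnmDE mulnDl. Qed.

Lemma edge_comb0 x : A 0%MM x = 0.
Proof. by rewrite /edge_comb big1 // => i _; rewrite mnm0E. Qed.

Lemma edge_comb_sum (I : Type) (r : seq I) (P : pred I) F x :
  A (\sum_(t <- r | P t) F t)%MM x = \sum_(t <- r | P t) A (F t) x.
Proof. by apply: (big_morph (A^~ x)) => [a b|]; [exact: edge_combD | exact: edge_comb0]. Qed.

Lemma edge_combB a b x : (a <= b)%MM -> A (b - a)%MM x = A b x - A a x.
Proof. by move=> le_ab; rewrite -{2}(submK le_ab) edge_combD addnK. Qed.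

Lemma edge_combU i x : A U_(i)%MM x = edge_vec eu ev i x.
Proof.
rewrite /edge_comb (bigD1 i) //= mnm1E eqxx mul1n big1 ?addn0 // => j ji.
by rewrite mnm1E eq_sym (negbTE ji).
Qed.

Lemma sum_edge_comb a : \sum_(x < m) A a x = 2 * mdeg a.
Proof.
have sum_eq1 (y : 'I_m) : \sum_(x < m) (y == x) = 1.
  by rewrite (bigD1 y) //= eqxx big1 // => x xy; rewrite eq_sym (negbTE xy).
rewrite /edge_comb exchange_big /= mdegE big_distrr /=; apply: eq_bigr => i _.
by rewrite -big_distrr /= /edge_vec big_split /= !sum_eq1 mulnC.
Qed.

Lemma edge_comb_mdeg a b : (forall x, A a x = A b x) -> mdeg a = mdeg b.
Proof.
move=> eq_ab; have : 2 * mdeg a = 2 * mdeg b.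
  by rewrite -!sum_edge_comb; apply: eq_bigr => x _.
lia.
Qed.

Lemma edge_comb_eq0 a : (forall x, A a x = 0) -> a = 0%MM.
Proof.
move=> a0; apply/eqP; rewrite -mdeg_eq0.
have : 2 * mdeg a = 0 by rewrite -sum_edge_comb big1.
lia.
Qed.
End EdgeComb.

Section SimpleGraph.
Variables (m k : nat) (eu ev : 'I_k -> 'I_m).
Hypotheses (edge_loopless : forall i, eu i != ev i)
  (edge_inj : forall i j, [set eu i; ev i] = [set eu j; ev j] -> i = j).
Local Notation A := (edge_comb eu ev).

Definition adjacent (x y : 'I_m) : Prop := exists i, [set eu i; ev i] = [set x; y].

Definition edge_mon (x y : 'I_m) : 'X_{1..k} :=
  (\sum_(i < k | [set eu i; ev i] == [set x; y]) U_(i))%MM.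

Lemma edge_monE i x y : [set eu i; ev i] = [set x; y] -> edge_mon x y = U_(i)%MM.
Proof.
move=> exy; rewrite /edge_mon (bigD1 i) /=; last by rewrite exy.
rewrite big1 ?addm0 // => j /andP[/eqP ejxy]; apply: contraNeq => _.
by rewrite (edge_inj (etrans ejxy (esym exy))).
Qed.

Lemma edge_monC x y : edge_mon x y = edge_mon y x.
Proof. by rewrite /edge_mon [[set y; x]]setUC. Qed.

Lemma adjacent_neq x y : adjacent x y -> x != y.
Proof.
case=> i exy; apply/eqP => x_y; have := cards2 (eu i) (ev i).
by rewrite exy x_y setUid cards1 (edge_loopless i).
Qed.

Lemma edge_comb_edge_mon x y z : adjacent x y -> A (edge_mon x y) z = (x == z) + (y == z).
Proof.
move=> adj_xy; have neq_xy := adjacent_neq adj_xy; case: adj_xy => i exy.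
rewrite (edge_monE exy) edge_combU /edge_vec (eq_count_set2 _ (edge_loopless i)).
by rewrite (eq_count_set2 _ neq_xy) exy.
Qed.

Lemma mdeg_edge_mon x y : adjacent x y -> mdeg (edge_mon x y) = 1.
Proof. by case=> i exy; rewrite (edge_monE exy) mdeg1. Qed.

Definition is_walk (s : nat -> 'I_m) (L : nat) : Prop :=
  forall t, t < L -> adjacent (s t) (s t.+1).

Definition walk_mon (c : bool) (P : pred nat) (s : nat -> 'I_m) (L : nat) : 'X_{1..k} :=
  (\sum_(0 <= t < L | P t && (odd t == c)) edge_mon (s t) (s t.+1))%MM.

Definition cons_walk (y : 'I_m) (s : nat -> 'I_m) (t : nat) : 'I_m :=
  if t is t'.+1 then s t' else y.

Lemma walk_mon0 c P s : walk_mon c P s 0 = 0%MM.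
Proof. by rewrite /walk_mon big_geq. Qed.

Lemma walk_mon_predT c P s L : (walk_mon c P s L <= walk_mon c predT s L)%MM.
Proof.
apply/mnm_lepP => i; rewrite !mnm_sumE big_mkcond [X in _ <= X]big_mkcond /=.
by apply: leq_sum => t _; case: (P t); rewrite //= mnm0E.
Qed.

Lemma walk_mon_cons c y s L : walk_mon c predT (cons_walk y s) L.+1 =
  ((if c then 0 else edge_mon y (s 0%N)) + walk_mon (~~ c) predT s L)%MM.
Proof.
rewrite /walk_mon big_mkcond big_nat_recl //= [in RHS]big_mkcond /=.
congr (_ + _)%MM; first by case: c.
by apply: eq_bigr => t _; case: (odd t); case: c.
Qed.

Lemma edge_comb_walk_mon P s L x : is_walk s L ->
  ((A (walk_mon false P s L) x)%:Z - (A (walk_mon true P s L) x)%:Z)%R = balance s L P x.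
Proof.
move=> walk_s; rewrite /balance (bigID (fun t => odd t)) /= addrC /walk_mon !edge_comb_sum.
rewrite !(big_morph Posz PoszD (erefl _)) -sumrN.
congr (_ + _)%R; apply: congr_big_nat => // t.
- by rewrite eqbF_neg.
- case/and3P=> /andP[_ /eqP even_t] _ tL; rewrite edge_comb_edge_mon; last exact: walk_s.
  by rewrite /step_sign even_t mul1r.
- by rewrite eqb_id.
- case/and3P=> /andP[_ /eqP odd_t] _ tL; rewrite edge_comb_edge_mon; last exact: walk_s.
  by rewrite /step_sign odd_t mulN1r.
Qed.

Lemma mdeg_walk_mon P s L : is_walk s L ->
  mdeg (walk_mon false P s L) + mdeg (walk_mon true P s L) = count P (iota 0 L).
Proof.
move=> walk_s; rewrite /walk_mon !mdeg_sum.
have -> : count P (iota 0 L) = \sum_(0 <= t < L | P t) mdeg (edge_mon (s t) (s t.+1)).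
  rewrite -sum1_count -{1}(subn0 L); apply: congr_big_nat => // t /andP[_ /andP[_ tL]].
  by rewrite mdeg_edge_mon //; apply: walk_s.
rewrite [RHS](bigID (fun t => odd t)) /= addnC.
by congr (_ + _); apply: eq_bigl => t; rewrite ?eqbF_neg ?eqb_id.
Qed.

Lemma balanced_walk_mon P s L : is_walk s L -> (forall x, balance s L P x = 0%R) ->
  forall x, A (walk_mon false P s L) x = A (walk_mon true P s L) x.
Proof.
move=> walk_s bal0 x; apply/eqP; rewrite -eqz_nat -subr_eq0.
by rewrite edge_comb_walk_mon // bal0.
Qed.

Lemma edge_at_vertex (b : 'X_{1..k}) y : 0 < A b y ->
  exists i z, [set eu i; ev i] = [set y; z] /\ (U_(i) <= b)%MM.
Proof.
rewrite lt0n sum_nat_eq0 => /forallPn [i]; rewrite /= muln_eq0 negb_or => /andP[bi yi].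
have ib : (U_(i) <= b)%MM by rewrite lep1mP.
have [<-|neq_uy] := eqVneq (eu i) y; first by exists i, (ev i).
have [ev_y|neq_vy] := eqVneq (ev i) y; first by exists i, (eu i); rewrite -ev_y setUC.
by rewrite /edge_vec (negbTE neq_uy) (negbTE neq_vy) in yi.
Qed.

(* Leave y along an edge of b, then along an edge of r: the degree condition
   guarantees that both edges exist, and it holds again for what remains. *)
Lemma odd_walk_exists (r b : 'X_{1..k}) (y x : 'I_m) :
  (forall z, A b z = A r z + (y == z) + (x == z)) ->
  exists L (s : nat -> 'I_m), [/\ odd L, s 0 = y, s L = x, is_walk s L &
    (walk_mon false predT s L <= b)%MM /\ (walk_mon true predT s L <= r)%MM].
Proof.
have [n] := ubnP (mdeg r + mdeg b); elim: n r b y => // n IH r b y deg_n Abr.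
have [i [z [eiyz ib]]] : exists i z, [set eu i; ev i] = [set y; z] /\ (U_(i) <= b)%MM.
  by apply: edge_at_vertex; rewrite Abr eqxx; lia.
have adj_yz : adjacent y z by exists i.
have AUi v : A U_(i)%MM v = (y == v) + (z == v) by rewrite -(edge_monE eiyz) edge_comb_edge_mon.
have [z_x|neq_zx] := eqVneq z x.
  exists 1, (cons_walk y (fun=> x)); split=> //; first by case=> // _; rewrite -z_x.
  rewrite !walk_mon_cons !walk_mon0 addm0 add0m -z_x (edge_monE eiyz).
  by split=> //; apply/mnm_lepP => j; rewrite mnm0E.
have [j [z' [ejzz' jr]]] : exists j z', [set eu j; ev j] = [set z; z'] /\ (U_(j) <= r)%MM.
  apply: edge_at_vertex; have := Abr z.
  rewrite -(submK ib) edge_combD AUi eqxx (eq_sym x) (negbTE neq_zx).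
  by rewrite (negbTE (adjacent_neq adj_yz)); lia.
have adj_zz' : adjacent z z' by exists j.
have AUj v : A U_(j)%MM v = (z == v) + (z' == v) by rewrite -(edge_monE ejzz') edge_comb_edge_mon.
have deg' : mdeg (r - U_(j)) + mdeg (b - U_(i)) < n.
  by move: deg_n; rewrite -{1}(submK ib) -{1}(submK jr) !mdegD !mdeg1; lia.
have A' v : A (b - U_(i)) v = A (r - U_(j)) v + (z' == v) + (x == v).
  by have := Abr v; rewrite -{1}(submK ib) -{1}(submK jr) !edge_combD AUi AUj; lia.
have [L [s [odd_L s0 sL walk_s [red_b blue_r]]]] := IH _ _ z' deg' A'.
exists L.+2, (cons_walk y (cons_walk z s)); split=> //=; first by rewrite negbK.
  by case=> [|[|t]] //= tL; [rewrite s0 | apply: walk_s].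
rewrite !walk_mon_cons /= s0 !add0m (edge_monE eiyz) (edge_monE ejzz') ![(U_(_) + _)%MM]addmC.
by split; [rewrite -(submK ib) | rewrite -(submK jr)]; apply: lepm_add; rewrite ?lepm_refl.
Qed.

Lemma closed_walk_exists u w : (forall x, A u x = A w x) -> u != 0%MM ->
  exists L (s : nat -> 'I_m), [/\ ~~ odd L, 0 < L, s L = s 0, is_walk s L &
    (walk_mon false predT s L <= u)%MM /\ (walk_mon true predT s L <= w)%MM].
Proof.
move=> Auw u0; have : mdeg u != 0 by rewrite mdeg_eq0.
rewrite mdegE sum_nat_eq0 => /forallPn [i /= ui]; have iu : (U_(i) <= u)%MM by rewrite lep1mP.
have Awr z : A w z = A (u - U_(i))%MM z + (ev i == z) + (eu i == z).
  by rewrite -Auw -{1}(submK iu) edge_combD edge_combU /edge_vec; lia.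
have [L [s [odd_L s0 sL walk_s [red_w blue_r]]]] := odd_walk_exists Awr.
exists L.+1, (cons_walk (eu i) s); split=> //=; first by rewrite odd_L.
  by case=> [_|t tL] /=; [exists i; rewrite s0 | apply: walk_s].
rewrite !walk_mon_cons /= s0 add0m (edge_monE (erefl _)) addmC -(submK iu).
by split=> //; apply: lepm_add; rewrite ?lepm_refl.
Qed.

Definition primitive_pair (u w : 'X_{1..k}) : Prop :=
  forall a b, (a <= u)%MM -> (b <= w)%MM -> (forall x, A a x = A b x) ->
    (a = 0%MM /\ b = 0%MM) \/ (a = u /\ b = w).

Lemma primitive_pair_walk s L : is_walk s L ->
  primitive_pair (walk_mon false predT s L) (walk_mon true predT s L) -> primitive_walk s L.
Proof.
move=> walk_s prim P bal0; rewrite -(mdeg_walk_mon P walk_s).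
have [[-> ->]|[-> ->]] := prim _ _ (walk_mon_predT _ _ _ _) (walk_mon_predT _ _ _ _)
  (balanced_walk_mon walk_s bal0); first by left; rewrite mdeg0.
by right; rewrite mdeg_walk_mon // count_predT size_iota.
Qed.

Lemma primitive_pair_mdeg u w : (forall x, A u x = A w x) -> u != w ->
  primitive_pair u w -> mdeg u + 2 <= m.
Proof.
move=> Auw neq_uw prim.
have u0 : u != 0%MM.
  apply: contra neq_uw => /eqP u0; rewrite u0 eq_sym; apply/eqP/(@edge_comb_eq0 _ _ eu ev) => x.
  by rewrite -Auw u0 edge_comb0.
have [L [s [even_L L_gt0 s_closed walk_s [red_u blue_w]]]] := closed_walk_exists Auw u0.
have bal0 x := balance_closed x even_L L_gt0 s_closed.
have [[red0 blue0]|[red_eq blue_eq]] := prim _ _ red_u blue_w (balanced_walk_mon walk_s bal0).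
  by have := mdeg_walk_mon predT walk_s; rewrite red0 blue0 mdeg0 count_predT size_iota; lia.
have len : L = mdeg u + mdeg w.
  by rewrite -red_eq -blue_eq mdeg_walk_mon // count_predT size_iota.
suff : L + 4 <= 2 * m by rewrite len (edge_comb_mdeg Auw); lia.
apply: (walk_length_bound (s := s)) => //.
- apply: contra neq_uw => /eqP L2; rewrite -red_eq -blue_eq L2.
  by rewrite /walk_mon unlock /= -L2 s_closed edge_monC.
- by move=> t tL; apply: adjacent_neq; apply: walk_s.
- by apply: primitive_pair_walk; rewrite // red_eq blue_eq.
Qed.
End SimpleGraph.

Local Open Scope ring_scope.

Section ToricFiber.
Variables (K : fieldType) (m k : nat) (eu ev : 'I_k -> 'I_m).
Local Notation A := (edge_comb eu ev).

Definition vertex_mon (u : 'X_{1..k}) : 'X_{1..m} := [multinom A u x | x < m].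

Definition edge_param : k.-tuple {mpoly K[m]} :=
  [tuple 'X_[(U_(eu i) + U_(ev i))%MM] | i < k].

Lemma edge_param_prodX (u : 'X_{1..k}) :
  \prod_(i < k) tnth edge_param i ^+ u i = 'X_[vertex_mon u].
Proof.
under eq_bigr => i _ do rewrite tnth_mktuple mpolyXn.
rewrite mprodXE; congr 'X_[_]; apply/mnmP => x.
rewrite mnm_sumE mnmE /edge_comb; apply: eq_bigr => i _.
by rewrite mulmnE mnmDE !mnm1E mulnC.
Qed.

Lemma toric_ideal_comp (f : {mpoly K[k]}) : toric_ideal eu ev f -> f \mPo edge_param = 0.
Proof.
case=> gs [gen_gs ->]; rewrite rmorph_sum /=; apply: big1_seq => g /andP[_ g_gs].
have [u [w [Auw ->]]] := gen_gs g g_gs.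
rewrite rmorphM rmorphB /= !comp_mpolyX !edge_param_prodX.
by rewrite (_ : vertex_mon u = vertex_mon w) ?subrr ?mulr0 //; apply/mnmP => x; rewrite !mnmE.
Qed.

Lemma toric_fiber_coeff_sum (f : {mpoly K[k]}) (T : 'X_{1..m}) : toric_ideal eu ev f ->
  \sum_(u <- msupp f | vertex_mon u == T) f@_u = 0.
Proof.
move=> If; have := congr1 (mcoeff T) (toric_ideal_comp If).
rewrite comp_mpolyE raddf_sum mcoeff0; apply: etrans.
rewrite big_mkcond /=; apply: eq_bigr => u _.
by rewrite mcoeffZ edge_param_prodX mcoeffX; case: (_ == _); rewrite ?mulr1 ?mulr0.
Qed.

Lemma toric_msupp_partner (f : {mpoly K[k]}) u : toric_ideal eu ev f -> u \in msupp f ->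
  exists2 w, w \in msupp f & w != u /\ (forall x, A w x = A u x).
Proof.
move=> If u_f.
have [/hasP[w w_f /andP[neq_wu /eqP Vwu]]|/hasPn no_w] :=
  boolP (has (fun w => (w != u) && (vertex_mon w == vertex_mon u)) (msupp f)).
  exists w => //; split=> // x.
  by have := congr1 (fun t : 'X_{1..m} => t x) Vwu; rewrite !mnmE.
have := toric_fiber_coeff_sum (vertex_mon u) If.
rewrite big_mkcond (bigD1_seq u) ?msupp_uniq //= eqxx big1_seq ?addr0.
  by move=> fu0; move: u_f; rewrite mcoeff_msupp fu0 eqxx.
move=> w /andP[neq_wu w_f]; have := no_w w w_f; rewrite neq_wu /=.
by case: eqP.
Qed.
End ToricFiber.

Lemma seq_max_strict (T : eqType) (r : rel T) :
  (forall a b c, r a b -> r b c -> r a c) ->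
  (forall a b, a != b -> r a b || r b a) -> forall s : seq T, s != [::] ->
  exists2 x, x \in s & forall y, y \in s -> y != x -> r y x.
Proof.
move=> r_trans r_total; elim=> [//|x s IH] _.
have [->|/IH [y y_s ymax]] := eqVneq s [::].
  by exists x => [|y]; rewrite mem_seq1 // => /eqP->; rewrite eqxx.
have [x_le_y|] := boolP ((x == y) || r x y).
  exists y; first by rewrite inE y_s orbT.
  move=> z; rewrite inE => /predU1P[->|/ymax //]; case/orP: x_le_y => [/eqP->|//].
  by rewrite eqxx.
rewrite negb_or => /andP[neq_xy /negbTE nxy].
have yx : r y x by move: (r_total _ _ neq_xy); rewrite nxy.
exists x => [|z]; rewrite ?mem_head // inE => /predU1P[->|z_s neq_zx]; rewrite ?eqxx //.
by have [->//|/(ymax z z_s)/r_trans] := eqVneq z y; apply.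
Qed.

Section TermOrder.
Variables (K : fieldType) (k : nat) (lt : rel 'X_{1..k}).
Hypothesis lt_order : term_order lt.

Lemma term_order_irr a : ~~ lt a a.
Proof. by case: lt_order => irr _ _ _ _; rewrite irr. Qed.

Lemma term_order_trans a b c : lt a b -> lt b c -> lt a c.
Proof. by case: lt_order => _ trans _ _ _; apply: trans. Qed.

Lemma term_order_total a b : a != b -> lt a b || lt b a.
Proof. by case: lt_order => _ _ total _ _; apply: total. Qed.

Lemma lepm_not_lt a b : (a <= b)%MM -> ~~ lt b a.
Proof.
case: lt_order => _ _ _ ltD lt0 le_ab; rewrite -(submK le_ab).
have [->|nz] := eqVneq (b - a)%MM 0%MM; first by rewrite add0m term_order_irr.
apply/negP => /(term_order_trans (ltD _ _ a (lt0 _ nz))); rewrite add0m.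
by rewrite (negbTE (term_order_irr _)).
Qed.

Lemma lead_mon_exists (p : {mpoly K[k]}) : p != 0 -> exists u, lead_mon lt p u.
Proof.
rewrite -msupp_eq0 => /(seq_max_strict term_order_trans term_order_total) [u u_p umax].
by exists u; split.
Qed.

Lemma lead_mon_uniq (p : {mpoly K[k]}) u w : lead_mon lt p u -> lead_mon lt p w -> u = w.
Proof.
move=> [u_p umax] [w_p wmax]; apply/eqP/contraT => neq_uw.
have := term_order_trans (wmax u u_p neq_uw) (umax w w_p _).
by rewrite eq_sym (negbTE (term_order_irr _)); apply.
Qed.

Lemma lead_mon_binomial a b : lt a b ->
  ('X_[a] - 'X_[b] : {mpoly K[k]}) != 0 /\ lead_mon lt ('X_[a] - 'X_[b] : {mpoly K[k]}) b.
Proof.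
move=> lt_ab; have neq_ab : a != b by apply: contraTneq lt_ab => ->; rewrite term_order_irr.
have b_supp : b \in msupp ('X_[a] - 'X_[b] : {mpoly K[k]}).
  by rewrite mcoeff_msupp mcoeffB !mcoeffX eqxx (negbTE neq_ab) sub0r oppr_eq0 oner_eq0.
split; first by apply: contraTneq b_supp => ->; rewrite msupp0.
split=> // y; rewrite mcoeff_msupp mcoeffB !mcoeffX => y_supp neq_yb.
move: y_supp; rewrite [b == y]eq_sym (negbTE neq_yb) subr0.
by case: (eqVneq a y) => [<- //|_]; rewrite /= eqxx.
Qed.
End TermOrder.

Section ReducedToricBasis.
Variables (K : fieldType) (m k : nat) (eu ev : 'I_k -> 'I_m) (lt : rel 'X_{1..k}).
Hypothesis lt_order : term_order lt.
Local Notation A := (edge_comb eu ev).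
Local Notation I := (@toric_ideal K m k eu ev).

Lemma toric_binomial a b : (forall x, A a x = A b x) -> I ('X_[a] - 'X_[b]).
Proof.
move=> Aab; exists [:: (1, 'X_[a] - 'X_[b])]; split.
  by move=> x /[!inE] /eqP-> /=; exists a, b.
by rewrite big_cons big_nil addr0 mul1r.
Qed.

Variables (G : seq {mpoly K[k]}) (g : {mpoly K[k]}) (mg : 'X_{1..k}).
Hypotheses (G_reduced : reduced_groebner lt I G) (g_G : g \in G) (g_lead : lead_mon lt g mg).

Lemma lead_le_binomial_lead a b c : (forall x, A a x = A b x) -> lt a b ->
  (b <= c)%MM -> c \in msupp g -> (mg <= b)%MM.
Proof.
move=> Aab lt_ab b_c c_g; have [nz lead_b] := lead_mon_binomial K lt_order lt_ab.
case: G_reduced => _ /(_ _ (toric_binomial Aab) nz b lead_b) [h h_G [mh h_lead mh_b]] _ red.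
have [h_g|neq_hg] := eqVneq h g.
  by move: h_lead; rewrite h_g => /(lead_mon_uniq lt_order g_lead) ->.
have neq_gh : g != h by rewrite eq_sym.
by have := red g h g_G h_G neq_gh mh h_lead c c_g; rewrite (lepm_trans mh_b b_c).
Qed.

Lemma trailing_not_binomial_lead a b c : (forall x, A a x = A b x) ->
  (b <= c)%MM -> c \in msupp g -> c != mg -> ~~ lt a b.
Proof.
move=> Aab b_c c_g neq_cmg; apply/negP => lt_ab.
have := lepm_not_lt lt_order (lepm_trans (lead_le_binomial_lead Aab lt_ab b_c c_g) b_c).
by rewrite (g_lead.2 c c_g neq_cmg).
Qed.

Lemma msupp_mdeg_lead u : u \in msupp g -> mdeg u = mdeg mg.
Proof.
move=> u_g; have [-> //|neq_umg] := eqVneq u mg.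
have [g_I _] : I g /\ g != 0 by case: G_reduced => /(_ g g_G).
have [w w_g [neq_wu Awu]] := toric_msupp_partner g_I u_g.
have [w_mg|neq_wmg] := eqVneq w mg; first by rewrite -w_mg (edge_comb_mdeg Awu).
case/orP: (term_order_total lt_order neq_wu) => [lt_wu|lt_uw].
- by have := trailing_not_binomial_lead Awu (lepm_refl u) u_g neq_umg; rewrite lt_wu.
- have Auw x : A u x = A w x by rewrite Awu.
  by have := trailing_not_binomial_lead Auw (lepm_refl w) w_g neq_wmg; rewrite lt_uw.
Qed.

Lemma lead_partner_primitive w : w \in msupp g -> w != mg ->
  (forall x, A w x = A mg x) -> primitive_pair eu ev mg w.
Proof.
move=> w_g neq_wmg Awmg.
have sub_eq c d : (c <= mg)%MM -> (d <= w)%MM -> (forall x, A c x = A d x) -> c != mg -> c = d.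
  move=> c_mg d_w Acd neq_cmg; apply/eqP/contraT => neq_cd.
  case/orP: (term_order_total lt_order neq_cd) => [lt_cd|lt_dc].
    by have := trailing_not_binomial_lead Acd d_w w_g neq_wmg; rewrite lt_cd.
  have mg_c := lead_le_binomial_lead (fun x => esym (Acd x)) lt_dc c_mg g_lead.1.
  by move: neq_cmg; rewrite (lepm_anti c_mg mg_c) eqxx.
move=> a b a_mg b_w Aab; have [a_eq|neq_amg] := eqVneq a mg.
  right; split=> //; rewrite -[w](submK b_w) (_ : (w - b)%MM = 0%MM) ?add0m //.
  by apply: (@edge_comb_eq0 _ _ eu ev) => x; rewrite edge_combB // Awmg -Aab a_eq subnn.
have a_b := sub_eq a b a_mg b_w Aab neq_amg.
have [a0|nz_a] := eqVneq a 0%MM; first by left; rewrite -a_b a0.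
have a_w : (a <= w)%MM by rewrite a_b.
have co_eq : (mg - a)%MM = (w - a)%MM.
  apply: sub_eq; rewrite ?lem_subr //; first by move=> x; rewrite !edge_combB // Awmg.
  apply: contra nz_a => /eqP mga; rewrite -mdeg_eq0 -(eqn_add2l (mdeg mg)) addn0.
  by rewrite -{1}mga -mdegD submK.
by move: neq_wmg; rewrite -(submK a_mg) -(submK a_w) co_eq eqxx.
Qed.
End ReducedToricBasis.

Unset Implicit Arguments.

Theorem corollary4p2 (K : fieldType) (m k : nat) (eu ev : 'I_k -> 'I_m) :
  (4 <= m)%N ->
  simple_graph eu ev ->
  forall g : {mpoly K[k]},
    in_universal_groebner (toric_ideal eu ev) g ->
    forall mm, mm \in msupp g -> (mdeg mm <= m - 2)%N.
Proof.
move=> _ [loopless edge_inj] g [lt [G [lt_order G_red g_G]]] mm mm_g.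
have [g_I g0] : toric_ideal eu ev g /\ g != 0 by case: G_red => /(_ g g_G).
have [mg g_lead] := lead_mon_exists lt_order g0.
have [w w_g [neq_wmg Awmg]] := toric_msupp_partner g_I g_lead.1.
have prim := lead_partner_primitive lt_order G_red g_G g_lead w_g neq_wmg Awmg.
have neq_mgw : mg != w by rewrite eq_sym.
have := primitive_pair_mdeg loopless edge_inj (fun x => esym (Awmg x)) neq_mgw prim.
rewrite -(msupp_mdeg_lead lt_order G_red g_G g_lead mm_g); lia.
Qed.
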